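(* Consider the system $x^+=f(x)$, $y=h(x)$ with $f:\mathcal{X}\to\mathcal{X}$, $h:\mathcal{X}\to\mathcal{Y}$, $\mathcal{X}\subset\mathbb{R}^n$, $\mathcal{Y}\subset\mathbb{R}^m$. Suppose: (A1) there exists an integer $p\ge1$ such that for every $x\in\mathcal{X}$ the set $[x]_{p-1}$ is either a singleton or empty; and (A2) for all $x,\hat x\in\mathcal{X}$ and all $k\in\{0,1,2,\ldots\}$, $\hat x\in[x]_k^+$ implies $[\hat x]_k^+=[x]_k^+$. Let $p$ be as in (A1) and define $\pi:\mathcal{X}\times\mathcal{Y}\to\{-1,0,1,\ldots,p-2\}$ by $$\pi(\hat x,y):=\max\{\,j\in\{-1,0,\ldots,p-2\}:\ [\hat x]_j^+\cap h^{-1}(y)\neq\emptyset\,\}.$$ Then the system $$\hat x^+\in f\big([\hat x]^+_{\pi(\hat x,y)}\cap h^{-1}(y)\big)$$ is a deadbeat observer for $x^+=f(x)$, $y=h(x)$.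
   Context: Inverse images are set-valued: $f^{-1}(x):=\{\eta\in\mathcal{X}: f(\eta)=x\}$ (empty if $x\notin f(\mathcal{X})$), $h^{-1}(y):=\{\eta\in\mathcal{X}:h(\eta)=y\}$; images of sets are $f(S)=\{f(s):s\in S\}$ and for a set $S$, $[S]_k:=\bigcup_{s\in S}[s]_k$. Define $[x]_0:=h^{-1}(h(x))$, and for $k\ge0$: $[x]_k^+:=f([f^{-1}(x)]_k)$, $[x]_{k+1}:=[x]_k^+\cap[x]_0$; additionally $[x]_{-1}^+:=\mathcal{X}$. Solutions: $\phi(0,x)=x$, $\phi(k+1,x)=f(\phi(k,x))$. Given $g:\mathcal{X}\times\mathcal{Y}\rightrightarrows\mathcal{X}$, a solution of $\hat x^+\in g(\hat x,h(x))$ driven by $x^+=f(x)$ is any sequence $\psi(k,\hat x,x)$ with $\psi(0,\hat x,x)=\hat x$, $\psi(k+1,\hat x,x)\in g(\psi(k,\hat x,x),h(\phi(k,x)))$. The system $\hat x^+\in g(\hat x,y)$ is a deadbeat observer if there is an integer $q\ge1$ such that all such solutions satisfy $\psi(k,\hat x,x)=\phi(k,x)$ for all $x,\hat x\in\mathcal{X}$ and $k\ge q$. *)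

From Stdlib Require Import ZArith.
Open Scope Z_scope.

Section Sys.
Variables (X Y : Type) (f : X -> X) (h : X -> Y).

(* [x]_k : [x]_0 = h^{-1}(h x);
   [x]_{k+1} = f([f^{-1}(x)]_k) ∩ [x]_0 *)
Fixpoint cls (k : nat) (x : X) : X -> Prop :=
  match k with
  | O => fun e => h e = h x
  | S k' => fun e =>
      (exists eta, (exists s, f s = x /\ cls k' s eta) /\ f eta = e)
      /\ h e = h x
  end.

(* [x]_k^+ = f([f^{-1}(x)]_k) for k >= 0 *)
Definition plus (k : nat) (x : X) : X -> Prop :=
  fun e => exists eta, (exists s, f s = x /\ cls k s eta) /\ f eta = e.

(* [x]_j^+ for integer j >= -1, with [x]_{-1}^+ = X *)
Definition plusZ (j : Z) (x : X) : X -> Prop :=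
  if j <? 0 then (fun _ => True) else plus (Z.to_nat j) x.

Definition is_pi (p : nat) (xh : X) (y : Y) (j : Z) : Prop :=
  -1 <= j <= Z.of_nat p - 2
  /\ (exists e, plusZ j xh e /\ h e = y)
  /\ (forall j', j < j' <= Z.of_nat p - 2 ->
        ~ (exists e, plusZ j' xh e /\ h e = y)).

Definition obs_g (p : nat) (xh : X) (y : Y) : X -> Prop :=
  fun z => exists j, is_pi p xh y j /\
    exists eta, (plusZ j xh eta /\ h eta = y) /\ f eta = z.

Definition phi (k : nat) (x : X) : X := Nat.iter k f x.

Definition deadbeat (g : X -> Y -> X -> Prop) : Prop :=
  exists q : nat, (1 <= q)%nat /\
    forall (x xh : X) (psi : nat -> X),
      psi O = xh ->
      (forall k, g (psi k) (h (phi k x)) (psi (S k))) ->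
      forall k, (q <= k)%nat -> psi k = phi k x.

End Sys.
Arguments cls {X Y}.
Arguments plus {X Y}.
Arguments plusZ {X Y}.
Arguments is_pi {X Y}.
Arguments obs_g {X Y}.
Arguments phi {X}.
Arguments deadbeat {X Y}.

(* If the true state [x] lies in [[xh]^+_(m-1)], then the observer picks some [eta] in
   [[xh]^+_(m-1)] with the same output as [x]; by (A2) both [x] and [eta] lie in
   [[eta]^+_(m-1)], hence in [[eta]_m], and so [f x] lies in [[f eta]^+_m].  Starting
   from [[.]^+_(-1) = X], the index of the class tracking the true state thus grows by
   one per step until it reaches [p - 1]; from then on the observer picks an [eta] with
   [x] and [eta] both in [[eta]_(p-1)], which by (A1) is a singleton, so [eta = x]. *)
From Stdlib Require Import ZArith Lia.

Section Classes.
Variables (X Y : Type) (f : X -> X) (h : X -> Y).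

Lemma cls_succ_sub k s e : cls f h (S k) s e -> cls f h k s e.
Proof.
  revert s e; induction k as [|k IH]; intros s e Hcls.
  - apply Hcls.
  - destruct Hcls as [[eta [[s0 [Hs0 Hc]] He]] Hh].
    split; [|exact Hh].
    exists eta; split; [|exact He].
    exists s0; split; [exact Hs0|apply IH, Hc].
Qed.

Lemma plus_antitone n m s e : (n <= m)%nat -> plus f h m s e -> plus f h n s e.
Proof.
  intros Hnm; induction Hnm as [|m _ IH]; intros Hplus; [exact Hplus|].
  apply IH.
  destruct Hplus as [eta [[s0 [Hs0 Hc]] He]].
  exists eta; split; [|exact He].
  exists s0; split; [exact Hs0|apply cls_succ_sub, Hc].
Qed.

Lemma plusZ_of_nat k x e : plusZ f h (Z.of_nat k) x e <-> plus f h k x e.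
Proof.
  unfold plusZ.
  replace (Z.of_nat k <? 0)%Z with false by (symmetry; apply Z.ltb_ge; lia).
  now rewrite Nat2Z.id.
Qed.

Lemma plusZ_antitone i j x e : (i <= j)%Z -> plusZ f h j x e -> plusZ f h i x e.
Proof.
  intros Hij Hj.
  destruct (Z.ltb_spec i 0) as [Hi|Hi].
  - unfold plusZ; now rewrite (proj2 (Z.ltb_lt i 0) Hi).
  - rewrite <- (Z2Nat.id i) by lia; rewrite <- (Z2Nat.id j) in Hj by lia.
    apply plusZ_of_nat; apply plusZ_of_nat in Hj.
    apply (plus_antitone _ (Z.to_nat j)); [lia|exact Hj].
Qed.

Lemma plus_f_of_cls k s eta : cls f h k s eta -> plus f h k (f s) (f eta).
Proof. intros Hc; exists eta; split; [exists s; split|]; easy. Qed.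

(* Uniform in [m] because [[a]^+_(-1)] is all of [X]. *)
Lemma cls_iff_plusZ m a e :
  cls f h m a e <-> plusZ f h (Z.of_nat m - 1) a e /\ h e = h a.
Proof.
  destruct m as [|m]; simpl cls.
  - unfold plusZ; simpl; tauto.
  - replace (Z.of_nat (S m) - 1)%Z with (Z.of_nat m) by lia.
    rewrite plusZ_of_nat; reflexivity.
Qed.

Hypothesis plus_class_eq : forall (x xh : X) (k : nat), plus f h k x xh ->
  forall e, plus f h k xh e <-> plus f h k x e.

Lemma plusZ_class_eq j x a e :
  plusZ f h j x a -> (plusZ f h j a e <-> plusZ f h j x e).
Proof.
  unfold plusZ; destruct (j <? 0)%Z; [tauto|].
  intros Ha; exact (plus_class_eq x a _ Ha e).
Qed.

Lemma cls_of_common_plusZ m x a b :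
  plusZ f h (Z.of_nat m - 1) x a -> plusZ f h (Z.of_nat m - 1) x b ->
  h b = h a -> cls f h m a b.
Proof.
  intros Ha Hb Hab; apply cls_iff_plusZ; split; [|exact Hab].
  now apply (plusZ_class_eq _ x).
Qed.

Section Observer.
Variable p : nat.
Hypothesis p_pos : (1 <= p)%nat.

Lemma is_pi_max xh y j i e :
  is_pi f h p xh y j -> (-1 <= i <= Z.of_nat p - 2)%Z ->
  plusZ f h i xh e -> h e = y -> (i <= j)%Z.
Proof.
  intros [_ [_ Hmax]] Hi He Hhe.
  destruct (Z_le_gt_dec i j) as [Hij|Hij]; [exact Hij|].
  exfalso; apply (Hmax i); [lia|].
  exists e; split; assumption.
Qed.

Lemma obs_g_preimage xh x xh' i :
  obs_g f h p xh (h x) xh' -> (-1 <= i <= Z.of_nat p - 2)%Z -> plusZ f h i xh x ->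
  exists eta, f eta = xh' /\ plusZ f h i xh eta /\ h eta = h x.
Proof.
  intros [j [Hpi [eta [[Hj Hhe] Hfe]]]] Hi Hx.
  exists eta; repeat split; [exact Hfe| |exact Hhe].
  apply (plusZ_antitone _ j); [|exact Hj].
  exact (is_pi_max _ _ _ _ _ Hpi Hi Hx eq_refl).
Qed.

Lemma obs_g_step xh x xh' m :
  obs_g f h p xh (h x) xh' -> (m <= p - 1)%nat ->
  plusZ f h (Z.of_nat m - 1) xh x ->
  exists eta, f eta = xh' /\ cls f h m eta x /\ cls f h m eta eta.
Proof.
  intros Hg Hm Hx.
  destruct (obs_g_preimage _ _ _ (Z.of_nat m - 1) Hg) as [eta [Hfe [Heta Hh]]];
    [lia|exact Hx|].
  exists eta; split; [exact Hfe|].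
  split; apply (cls_of_common_plusZ _ xh); easy.
Qed.

Variables (x : X) (psi : nat -> X).
Hypothesis psi_step : forall k, obs_g f h p (psi k) (h (phi f k x)) (psi (S k)).

Lemma observer_tracks k :
  plusZ f h (Z.of_nat (Nat.min k (p - 1)) - 1) (psi k) (phi f k x).
Proof.
  induction k as [|k IH].
  - unfold plusZ; now simpl.
  - destruct (obs_g_step _ _ _ (Nat.min k (p - 1)) (psi_step k)) as
        [eta [Hfe [Hx _]]]; [lia|exact IH|].
    apply (plusZ_antitone _ (Z.of_nat (Nat.min k (p - 1)))); [lia|].
    apply plusZ_of_nat; rewrite <- Hfe.
    exact (plus_f_of_cls _ _ _ Hx).
Qed.

End Observer.
End Classes.

Theorem theorem3 (X Y : Type) (f : X -> X) (h : X -> Y) (p : nat) :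
  (1 <= p)%nat ->
  (forall x : X,
     (exists z, forall e, cls f h (p - 1) x e <-> e = z)
     \/ (forall e, ~ cls f h (p - 1) x e)) ->
  (forall (x xh : X) (k : nat), plus f h k x xh ->
     forall e, plus f h k xh e <-> plus f h k x e) ->
  deadbeat f h (obs_g f h p).
Proof.
  intros Hp A1 A2; exists p; split; [exact Hp|].
  intros x xh psi _ Hstep k Hk.
  destruct k as [|k]; [lia|].
  destruct (obs_g_step _ _ _ _ A2 p Hp _ _ _ (p - 1) (Hstep k) (le_n _))
    as [eta [Hfe [Hx Heta]]].
  { replace (p - 1)%nat with (Nat.min k (p - 1)) by lia.
    exact (observer_tracks _ _ _ _ A2 p Hp x psi Hstep k). }
  destruct (A1 eta) as [[z Hz] | Hempty].
  - apply Hz in Hx; apply Hz in Heta; subst.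
    simpl; congruence.
  - destruct (Hempty _ Heta).
Qed.
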